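(* Let $\mathcal{G}=(\mathcal{N}\cup\{0\},\mathcal{E})$ be a tree (radial distribution network) with root (substation) bus $0$, and for each bus $i\in\mathcal{N}$ let $\mathcal{E}_i\subseteq\mathcal{E}$ be the set of lines on the unique path from bus $0$ to bus $i$. For each line $(\zeta,\xi)\in\mathcal{E}$ and each pair of phases $\varphi,\phi\in\{a,b,c\}$ let $z^{\varphi\phi}_{\zeta\xi}\in\mathbb{C}$ be the (self- or mutual) impedance entry of that line, and for buses $i,j$ set $$Z^{\varphi\phi}_{ij}=\sum_{(\zeta,\xi)\in\mathcal{E}_i\cap\mathcal{E}_j} z^{\varphi\phi}_{\zeta\xi}.$$ Let $\omega=e^{-\mathfrak{i}2\pi/3}$ (with $\mathfrak{i}=\sqrt{-1}$), and identify the phases $a,b,c$ with $0,1,2$ when forming $\varphi-\phi$. For buses $i,j$ and phases $\varphi,\phi$ define $$\partial_{p_j^{\phi}}v_i^{\varphi}=2\,\mathrm{Re}\{\overline{Z}^{\varphi\phi}_{ij}\,\omega^{\varphi-\phi}\},\qquad \partial_{q_j^{\phi}}v_i^{\varphi}=-2\,\mathrm{Im}\{\overline{Z}^{\varphi\phi}_{ij}\,\omega^{\varphi-\phi}\},$$ where the bar denotes complex conjugation. Let $\mathcal{N}_k$ and $\mathcal{N}_h$ be the node sets of two non-overlapping (disjoint) subtrees of $\mathcal{G}$ not containing bus $0$, with root buses $n_k^0$ and $n_h^0$ respectively. Then for every $i\in\mathcal{N}_k$, every $j\in\mathcal{N}_h$, and all phases $\varphi,\phi$, $$\partial_{p_j^{\phi}}v_i^{\varphi}=\partial_{p_{n_h^0}^{\phi}}v_{n_k^0}^{\varphi}=2\,\mathrm{Re}\{\overline{Z}^{\varphi\phi}_{n_k^0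 n_h^0}\,\omega^{\varphi-\phi}\},\qquad \partial_{q_j^{\phi}}v_i^{\varphi}=\partial_{q_{n_h^0}^{\phi}}v_{n_k^0}^{\varphi}=-2\,\mathrm{Im}\{\overline{Z}^{\varphi\phi}_{n_k^0 n_h^0}\,\omega^{\varphi-\phi}\}.$$
   Context: A subtree of a tree consists of a node of the tree, all of this node's descendants (with respect to the tree rooted at bus $0$), and the connecting lines among them; that node is the root bus of the subtree. The quantities $\partial_{p_j^{\phi}}v_i^{\varphi}$ and $\partial_{q_j^{\phi}}v_i^{\varphi}$ are the entries of the sensitivity matrices of a linearized multi-phase power flow model $\bm v=\mathbf R\bm p+\mathbf X\bm q+\tilde{\bm v}$ relating squared voltage magnitudes $v_i^\varphi$ to real and reactive power injections $p_j^\phi,q_j^\phi$ (obtained assuming negligible line losses, approximately equal three-phase voltage magnitudes and phase differences close to $2\pi/3$); in the claim they are defined directly by the stated formulas. *)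

From mathcomp Require Import all_boot all_algebra.
From mathcomp Require Import boolp reals trigo complex.
Import GRing.Theory Num.Theory.
Set Implicit Arguments. Unset Strict Implicit. Unset Printing Implicit Defensive.
Local Open Scope ring_scope.
Local Open Scope complex_scope.

(* A rooted tree on the finite set of buses T, with root (substation) r,
   given by its parent map: the lines are the pairs (par x, x) for x <> r,
   and every bus reaches the root by iterating par. *)
Definition rooted_tree (T : finType) (r : T) (par : T -> T) : Prop :=
  par r = r /\ forall i : T, exists k : nat, iter k par i = r.

Definition anc (T : finType) (par : T -> T) (x i : T) : Prop :=
  exists k : nat, iter k par i = x.

(* The line (par x, x), identified by its lower end x, belongs to E_i,
   the set of lines on the unique path from the root r to bus i. *)
Definition in_path (T : finType) (r : T) (par : T -> T) (x i : T) : Prop :=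
  x <> r /\ anc par x i.

(* Phases a,b,c are 'I_3 (0,1,2).  z x phi psi is the impedance entry
   z^{phi psi} of the line (par x, x). *)
Definition Zmut (R : realType) (T : finType) (r : T) (par : T -> T)
  (z : T -> 'I_3 -> 'I_3 -> R[i]) (i j : T) (ph ps : 'I_3) : R[i] :=
  \sum_(x : T | `[< in_path r par x i /\ in_path r par x j >]) z x ph ps.

Definition omega (R : realType) : R[i] :=
  (cos (2 * pi / 3 : R))%:C - 'i * (sin (2 * pi / 3 : R))%:C.

Definition dv_p (R : realType) (T : finType) (r : T) (par : T -> T)
  (z : T -> 'I_3 -> 'I_3 -> R[i]) (i j : T) (ph ps : 'I_3) : R[i] :=
  2 * 'Re ((Zmut r par z i j ph ps)^* * omega R ^ ((ph : nat)%:Z - (ps : nat)%:Z)).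

Definition dv_q (R : realType) (T : finType) (r : T) (par : T -> T)
  (z : T -> 'I_3 -> 'I_3 -> R[i]) (i j : T) (ph ps : 'I_3) : R[i] :=
  - 2 * 'Im ((Zmut r par z i j ph ps)^* * omega R ^ ((ph : nat)%:Z - (ps : nat)%:Z)).

From mathcomp Require Import all_boot all_algebra.
From mathcomp Require Import boolp reals trigo complex.
Import GRing.Theory Num.Theory.
Local Open Scope ring_scope.
Local Open Scope complex_scope.

(* The ancestors of a bus form a chain.  So if x lies above i in the subtree
   of nk and above j in the subtree of nh, then x cannot lie below nk, for
   otherwise j would belong to both subtrees; hence x lies above nk, and
   likewise above nh.  The lines shared by the paths to i and j are therefore
   exactly those shared by the paths to nk and nh, so Z_ij = Z_{nk nh}. *)

Section Ancestors.

Context {T : finType} {par : T -> T}.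

Lemma anc_refl x : anc par x x.
Proof. by exists 0%N. Qed.

Lemma anc_trans {x y i} : anc par x y -> anc par y i -> anc par x i.
Proof. by move=> [m <-] [k <-]; exists (m + k)%N; rewrite iterD. Qed.

Lemma anc_total {x y i} : anc par x i -> anc par y i -> anc par x y \/ anc par y x.
Proof.
move=> [k <-] [m <-]; have [le_km | lt_mk] := leqP k m.
  by right; exists (m - k)%N; rewrite -iterD subnK.
by left; exists (k - m)%N; rewrite -iterD subnK // ltnW.
Qed.

Lemma anc_disjoint_subtree_root {nk nh x i j} :
  (forall y, ~ (anc par nk y /\ anc par nh y)) ->
  anc par nk i -> anc par nh j -> anc par x i -> anc par x j -> anc par x nk.
Proof.
move=> disjoint_subtrees nk_i nh_j x_i x_j.
have [//| nk_x] := anc_total x_i nk_i.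
by case: (disjoint_subtrees j); split; [apply: anc_trans nk_x x_j|].
Qed.

Lemma common_anc_disjoint_subtrees {nk nh} x {i j} :
  (forall y, ~ (anc par nk y /\ anc par nh y)) ->
  anc par nk i -> anc par nh j ->
  (anc par x i /\ anc par x j <-> anc par x nk /\ anc par x nh).
Proof.
move=> disjoint_subtrees nk_i nh_j; split=> [[x_i x_j] | [x_nk x_nh]].
  split.
    exact: anc_disjoint_subtree_root disjoint_subtrees nk_i nh_j x_i x_j.
  have disjoint_sym y : ~ (anc par nh y /\ anc par nk y).
    by case=> ? ?; apply: (disjoint_subtrees y).
  exact: anc_disjoint_subtree_root disjoint_sym nh_j nk_i x_j x_i.
by split; [apply: anc_trans x_nk nk_i | apply: anc_trans x_nh nh_j].
Qed.

Lemma Zmut_disjoint_subtrees {R : realType} (r : T)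
    (z : T -> 'I_3 -> 'I_3 -> R[i]) {nk nh i j} ph ps :
  (forall y, ~ (anc par nk y /\ anc par nh y)) ->
  anc par nk i -> anc par nh j ->
  Zmut r par z i j ph ps = Zmut r par z nk nh ph ps.
Proof.
move=> disjoint_subtrees nk_i nh_j; apply: eq_bigl => x.
congr (asbool _); apply: propext.
have := common_anc_disjoint_subtrees x disjoint_subtrees nk_i nh_j.
by rewrite /in_path; tauto.
Qed.

End Ancestors.

Theorem mainTheorem1 (R : realType) (T : finType) (r : T) (par : T -> T)
  (z : T -> 'I_3 -> 'I_3 -> R[i]) (nk nh : T) :
  rooted_tree r par ->
  nk <> r -> nh <> r ->
  (forall x : T, ~ (anc par nk x /\ anc par nh x)) ->
  forall (i j : T) (ph ps : 'I_3),
    anc par nk i -> anc par nh j ->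
    (dv_p r par z i j ph ps = dv_p r par z nk nh ph ps /\
     dv_p r par z nk nh ph ps =
       2 * 'Re ((Zmut r par z nk nh ph ps)^* * omega R ^ ((ph : nat)%:Z - (ps : nat)%:Z))) /\
    (dv_q r par z i j ph ps = dv_q r par z nk nh ph ps /\
     dv_q r par z nk nh ph ps =
       - 2 * 'Im ((Zmut r par z nk nh ph ps)^* * omega R ^ ((ph : nat)%:Z - (ps : nat)%:Z))).
Proof.
move=> _ _ _ disjoint_subtrees i j ph ps nk_i nh_j.
by rewrite /dv_p /dv_q (Zmut_disjoint_subtrees r z ph ps disjoint_subtrees nk_i nh_j).
Qed.
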